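(* Let $\theta\in(0,\pi)$ and let $\mathcal{B}_\theta$ be the moduli space of spherical bigons of angle $\theta$ with labeled sides, parametrized by $(K_1,K_2)\in\mathbb{R}^2$, where $K_i=\log\cot r_i$ and $r_i$ is the radius of the disk $D_i\subset\mathbb{S}^2$ whose boundary contains side $i$. Let $T_i$ be the total geodesic curvature of side $i$ (its length times $\cot r_i$). Then the matrix-valued function $$\begin{pmatrix}\frac{\partial T_1}{\partial K_1}&\frac{\partial T_1}{\partial K_2}\\[3pt]\frac{\partial T_2}{\partial K_1}&\frac{\partial T_2}{\partial K_2}\end{pmatrix}$$ on $\mathcal{B}_\theta$ is symmetric and positive definite at every point.
   Context: A spherical bigon is the intersection $D_1\cap D_2$ of two open round disks in $\mathbb{S}^2$ of radii less than $\frac{\pi}{2}$, neither containing the other, with angle the interior angle at its corners; $\mathcal{B}_\theta$ consists of such bigons of angle $\theta$ with the two sides labeled $1,2$, up to label-preserving isometry. The map $(r_1,r_2)$ is a bijection $\mathcal{B}_\theta\to(0,\frac{\pi}{2})^2$, so $(K_1,K_2)$ parametrizes $\mathcal{B}_\theta$ by $\mathbb{R}^2$. *)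

From Stdlib Require Import Reals.
From Coquelicot Require Import Coquelicot.
Open Scope R_scope.

(* radius: cot r = exp K, i.e. r = arctan (exp (-K)) in (0, pi/2) *)
Definition bigon_radius (K : R) : R := atan (exp (- K)).

(* spherical distance between the centers c1, c2 of D1, D2: spherical law of
   cosines in the triangle (c1, c2, p), p a corner, where the angle at p
   between the radii p->c1, p->c2 equals pi - th. *)
Definition center_dist (th K1 K2 : R) : R :=
  let r1 := bigon_radius K1 in let r2 := bigon_radius K2 in
  acos (cos r1 * cos r2 - sin r1 * sin r2 * cos th).

(* half of the central angle (at c_i) subtended by side i (the arc of
   boundary D_i lying in the closure of D_j): the angle at c_i of the
   triangle (c1, c2, p), by the spherical law of cosines. *)
Definition half_central_angle (th Ki Kj : R) : R :=
  let ri := bigon_radius Ki in let rj := bigon_radius Kj in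
  let d := center_dist th Ki Kj in
  acos ((cos rj - cos ri * cos d) / (sin ri * sin d)).

(* length of side i: arc of a circle of spherical radius r_i, central angle
   2 * phi_i, hence length 2 * phi_i * sin r_i *)
Definition side_length (th Ki Kj : R) : R :=
  2 * half_central_angle th Ki Kj * sin (bigon_radius Ki).

Definition total_curv (th Ki Kj : R) : R :=
  side_length th Ki Kj * (cos (bigon_radius Ki) / sin (bigon_radius Ki)).

Definition T1 (th K1 K2 : R) : R := total_curv th K1 K2.
Definition T2 (th K1 K2 : R) : R := total_curv th K2 K1.

Definition pos_def2 (a b c d : R) : Prop :=
  forall x y : R, (x <> 0 \/ y <> 0) ->
    0 < x * (a * x + b * y) + y * (c * x + d * y).

(* Write c_i = cos r_i and s_i = sin r_i. The side i subtends the central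
   angle 2 phi_i with cot phi_i = (s_i c_j + c_i s_j cos th) / (s_j sin th),
   so T_i = 2 c_i phi_i; and dr_i/dK_i = - s_i c_i. Differentiating,
   dT_i/dK_j = - 2 c_i c_j s_i s_j sin th / sin^2 d (d the distance between
   the centres) is symmetric in i, j and negative, while the row sum
   dT_i/dK_i + dT_i/dK_j = s_i^2 c_i (2 phi_i - sin (2 phi_i)) is positive.
   A symmetric 2x2 matrix with negative off-diagonal entries and positive row
   sums is positive definite. *)

From Stdlib Require Import Reals Lra Nsatz.
From Coquelicot Require Import Coquelicot.
Open Scope R_scope.

Definition cosr (K : R) : R := cos (bigon_radius K).
Definition sinr (K : R) : R := sin (bigon_radius K).

Lemma sqrt_1_plus_sqr (t : R) :
  0 < sqrt (1 + t²) /\ sqrt (1 + t²) * sqrt (1 + t²) = 1 + t².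
Proof.
  assert (Ht : 0 < 1 + t²) by (pose proof (Rle_0_sqr t); lra).
  split; [apply sqrt_lt_R0 | apply sqrt_sqrt]; lra.
Qed.

Lemma cosr_gt0 (K : R) : 0 < cosr K.
Proof.
  unfold cosr, bigon_radius. rewrite cos_atan.
  destruct (sqrt_1_plus_sqr (exp (- K))) as [HQ _].
  apply Rdiv_lt_0_compat; lra.
Qed.

Lemma sinr_gt0 (K : R) : 0 < sinr K.
Proof.
  unfold sinr, bigon_radius. rewrite sin_atan.
  destruct (sqrt_1_plus_sqr (exp (- K))) as [HQ _].
  apply Rdiv_lt_0_compat; [apply exp_pos | lra].
Qed.

Lemma cosr_sinr_sqr (K : R) : cosr K ^ 2 + sinr K ^ 2 = 1.
Proof. unfold cosr, sinr. rewrite <- !Rsqr_pow2, Rplus_comm. apply sin2_cos2. Qed.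

Lemma is_derive_bigon_radius (K : R) :
  is_derive bigon_radius K (- (sinr K * cosr K)).
Proof.
  unfold sinr, cosr, bigon_radius. auto_derive; [easy |].
  rewrite sin_atan, cos_atan.
  destruct (sqrt_1_plus_sqr (exp (- K))) as [HQ HQQ].
  set (Q := sqrt (1 + (exp (- K))²)) in *.
  replace (1 + exp (- K) * (exp (- K) * 1)) with (Q * Q) by (rewrite HQQ; unfold Rsqr; ring).
  field. lra.
Qed.

Lemma is_derive_cosr (K : R) : is_derive cosr K (sinr K ^ 2 * cosr K).
Proof.
  replace (sinr K ^ 2 * cosr K)
    with (scal (- (sinr K * cosr K)) (- sin (bigon_radius K)))
    by (unfold sinr, cosr, scal; simpl; unfold mult; simpl; ring).
  apply (is_derive_comp cos bigon_radius);
    [apply is_derive_cos | apply is_derive_bigon_radius].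
Qed.

Lemma is_derive_sinr (K : R) : is_derive sinr K (- (cosr K ^ 2 * sinr K)).
Proof.
  replace (- (cosr K ^ 2 * sinr K))
    with (scal (- (sinr K * cosr K)) (cos (bigon_radius K)))
    by (unfold sinr, cosr, scal; simpl; unfold mult; simpl; ring).
  apply (is_derive_comp sin bigon_radius);
    [apply is_derive_sin | apply is_derive_bigon_radius].
Qed.

Lemma ex_derive_cosr (K : R) : ex_derive cosr K.
Proof. eexists; apply is_derive_cosr. Qed.

Lemma ex_derive_sinr (K : R) : ex_derive sinr K.
Proof. eexists; apply is_derive_sinr. Qed.

Lemma Derive_cosr (K : R) : Derive (fun x => cosr x) K = sinr K ^ 2 * cosr K.
Proof. apply is_derive_unique, is_derive_cosr. Qed.

Lemma Derive_sinr (K : R) : Derive (fun x => sinr x) K = - (cosr K ^ 2 * sinr K).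
Proof. apply is_derive_unique, is_derive_sinr. Qed.

Definition arccot (x : R) : R := PI / 2 - atan x.

Lemma arccot_bound (x : R) : 0 < arccot x < PI.
Proof. unfold arccot. pose proof (atan_bound x). lra. Qed.

Lemma cos_arccot_div (N M : R) :
  0 < M -> cos (arccot (N / M)) = N / sqrt (N ^ 2 + M ^ 2).
Proof.
  intros HM. unfold arccot. rewrite cos_shift, sin_atan.
  replace (1 + (N / M)²) with ((N ^ 2 + M ^ 2) / M ^ 2)
    by (unfold Rsqr; field; lra).
  rewrite sqrt_div_alt, sqrt_pow2 by (try apply pow2_gt_0; lra).
  assert (0 < sqrt (N ^ 2 + M ^ 2)) by (apply sqrt_lt_R0; nra).
  field. lra.
Qed.

Lemma is_derive_arccot_comp (u : R -> R) (x du : R) :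
  is_derive u x du -> is_derive (fun t => arccot (u t)) x (- du / (1 + (u x)²)).
Proof.
  intros Hu.
  replace (- du / (1 + (u x)²)) with (scal du (- / (1 + (u x)²)))
    by (unfold scal, Rdiv; simpl; unfold mult; simpl; ring).
  apply (is_derive_comp arccot u); [| exact Hu].
  pose proof (Rle_0_sqr (u x)).
  unfold arccot. auto_derive; [easy | unfold Rsqr in *; field; lra].
Qed.

Lemma div_1_plus_sqr_lt_arccot (q : R) : q / (1 + q²) < arccot q.
Proof.
  pose proof (arccot_bound q) as Hu.
  destruct (sqrt_1_plus_sqr q) as [HQ HQQ].
  assert (Hsin2 : sin (2 * arccot q) = 2 * (q / (1 + q²))).
  { unfold arccot. rewrite sin_2a, sin_shift, cos_shift, sin_atan, cos_atan.
    set (Q := sqrt (1 + q²)) in *. rewrite <- HQQ. field. lra. }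
  pose proof (sin_lt_x (2 * arccot q)). lra.
Qed.

Lemma pos_def2_of_row_sums (a b d : R) :
  b < 0 -> 0 < a + b -> 0 < d + b -> pos_def2 a b b d.
Proof.
  intros Hb Ha Hd x y Hxy.
  replace (x * (a * x + b * y) + y * (b * x + d * y))
    with ((a + b) * x ^ 2 + (d + b) * y ^ 2 - b * (x - y) ^ 2) by ring.
  assert (0 <= - b * (x - y) ^ 2) by (apply Rmult_le_pos; [lra | apply pow2_ge_0]).
  destruct Hxy as [Hx | Hy].
  - pose proof (pow2_gt_0 x Hx). pose proof (pow2_ge_0 y). nra.
  - pose proof (pow2_gt_0 y Hy). pose proof (pow2_ge_0 x). nra.
Qed.

Section Bigon.

Variable th : R.
Hypothesis Hth : 0 < th < PI.

Definition cos_dist (i j : R) : R := cosr i * cosr j - sinr i * sinr j * cos th.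
Definition sin2_dist (i j : R) : R := 1 - cos_dist i j ^ 2.
Definition cot_num (i j : R) : R := sinr i * cosr j + cosr i * sinr j * cos th.
Definition cot_den (j : R) : R := sinr j * sin th.

Lemma cot_den_gt0 (j : R) : 0 < cot_den j.
Proof.
  apply Rmult_lt_0_compat; [apply sinr_gt0 | apply sin_gt_0; lra].
Qed.

Lemma cot_num_cot_den_sqr (i j : R) :
  cot_num i j ^ 2 + cot_den j ^ 2 = sin2_dist i j.
Proof.
  unfold cot_num, cot_den, sin2_dist, cos_dist.
  pose proof (cosr_sinr_sqr i). pose proof (cosr_sinr_sqr j).
  pose proof (sin2_cos2 th). unfold Rsqr in *.
  (* [nsatz] only succeeds once the powers [x ^ 2] are unfolded to products. *)
  simpl in *. nsatz.
Qed.

Lemma sin2_dist_gt0 (i j : R) : 0 < sin2_dist i j.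
Proof.
  rewrite <- cot_num_cot_den_sqr.
  pose proof (pow2_ge_0 (cot_num i j)). pose proof (pow2_gt_0 (cot_den j)).
  pose proof (cot_den_gt0 j). nra.
Qed.

Lemma sin2_dist_sym (i j : R) : sin2_dist i j = sin2_dist j i.
Proof. unfold sin2_dist, cos_dist. ring. Qed.

Lemma cosr_sub_cos_dist (i j : R) :
  cosr j - cosr i * cos_dist i j = sinr i * cot_num i j.
Proof.
  unfold cos_dist, cot_num. pose proof (cosr_sinr_sqr i). simpl in *. nsatz.
Qed.

Lemma half_central_angle_arccot (i j : R) :
  half_central_angle th i j = arccot (cot_num i j / cot_den j).
Proof.
  pose proof (sinr_gt0 i). pose proof (cot_den_gt0 j) as HM.
  pose proof (sin2_dist_gt0 i j) as HW. pose proof (pow2_ge_0 (cos_dist i j)).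
  assert (HS : 0 < sqrt (sin2_dist i j)) by (apply sqrt_lt_R0; exact HW).
  unfold half_central_angle, center_dist.
  fold (cosr i) (sinr i) (cosr j) (sinr j) (cos_dist i j).
  rewrite cos_acos, sin_acos by (unfold sin2_dist in HW; unfold Rsqr; nra).
  rewrite cosr_sub_cos_dist, Rsqr_pow2. fold (sin2_dist i j).
  replace (sinr i * cot_num i j / (sinr i * sqrt (sin2_dist i j)))
    with (cot_num i j / sqrt (cot_num i j ^ 2 + cot_den j ^ 2))
    by (rewrite cot_num_cot_den_sqr; field; lra).
  rewrite <- cos_arccot_div by exact HM.
  apply acos_cos. pose proof (arccot_bound (cot_num i j / cot_den j)). lra.
Qed.

Lemma total_curv_arccot (i j : R) :
  total_curv th i j = 2 * cosr i * arccot (cot_num i j / cot_den j).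
Proof.
  unfold total_curv, side_length. rewrite half_central_angle_arccot.
  fold (cosr i) (sinr i). pose proof (sinr_gt0 i). field. lra.
Qed.

Lemma is_derive_cot_quot_l (i j : R) :
  is_derive (fun x => cot_num x j / cot_den j) i
    (- (sinr i * cosr i * cos_dist i j) / cot_den j).
Proof.
  unfold cot_num. auto_derive; [auto using ex_derive_cosr, ex_derive_sinr |].
  rewrite Derive_cosr, Derive_sinr.
  pose proof (cosr_sinr_sqr i). pose proof (cot_den_gt0 j).
  unfold cos_dist. field_simplify_eq; [simpl in *; nsatz | lra].
Qed.

Lemma is_derive_cot_quot_r (i j : R) :
  is_derive (fun y => cot_num i y / cot_den y) j (sinr i * cosr j / cot_den j).
Proof.
  pose proof (sinr_gt0 j). assert (0 < sin th) by (apply sin_gt_0; lra).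
  unfold cot_num, cot_den.
  auto_derive;
    [repeat split; auto using ex_derive_cosr, ex_derive_sinr, Rgt_not_eq, Rmult_lt_0_compat |].
  rewrite Derive_cosr, Derive_sinr.
  pose proof (cosr_sinr_sqr j).
  field_simplify_eq; [simpl in *; nsatz | split; apply Rgt_not_eq; assumption].
Qed.

Lemma is_derive_arccot_cot_quot_l (i j : R) :
  is_derive (fun x => arccot (cot_num x j / cot_den j)) i
    (sinr i * cosr i * cos_dist i j * cot_den j / sin2_dist i j).
Proof.
  pose proof (cot_den_gt0 j). pose proof (sin2_dist_gt0 i j).
  replace (sinr i * cosr i * cos_dist i j * cot_den j / sin2_dist i j)
    with (- (- (sinr i * cosr i * cos_dist i j) / cot_den j)
          / (1 + (cot_num i j / cot_den j)²)).
  - apply (is_derive_arccot_comp (fun x => cot_num x j / cot_den j)), is_derive_cot_quot_l.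
  - rewrite <- (cot_num_cot_den_sqr i j) in *. unfold Rsqr. field. lra.
Qed.

Lemma is_derive_arccot_cot_quot_r (i j : R) :
  is_derive (fun y => arccot (cot_num i y / cot_den y)) j
    (- (sinr i * cosr j * cot_den j / sin2_dist i j)).
Proof.
  pose proof (cot_den_gt0 j). pose proof (sin2_dist_gt0 i j).
  replace (- (sinr i * cosr j * cot_den j / sin2_dist i j))
    with (- (sinr i * cosr j / cot_den j) / (1 + (cot_num i j / cot_den j)²)).
  - apply (is_derive_arccot_comp (fun y => cot_num i y / cot_den y)), is_derive_cot_quot_r.
  - rewrite <- (cot_num_cot_den_sqr i j) in *. unfold Rsqr. field. lra.
Qed.

Definition dcurv_self (i j : R) : R :=
  2 * sinr i ^ 2 * cosr i * arccot (cot_num i j / cot_den j)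
  + 2 * cosr i ^ 2 * sinr i * cot_den j * cos_dist i j / sin2_dist i j.

Definition dcurv_cross (i j : R) : R :=
  - (2 * cosr i * cosr j * sinr i * cot_den j / sin2_dist i j).

Lemma is_derive_total_curv_self (i j : R) :
  is_derive (fun x => total_curv th x j) i (dcurv_self i j).
Proof.
  apply (is_derive_ext (fun x => 2 * cosr x * arccot (cot_num x j / cot_den j))).
  { intros x. symmetry. apply total_curv_arccot. }
  replace (dcurv_self i j)
    with (2 * (sinr i ^ 2 * cosr i) * arccot (cot_num i j / cot_den j)
          + 2 * cosr i * (sinr i * cosr i * cos_dist i j * cot_den j / sin2_dist i j))
    by (unfold dcurv_self, Rdiv; ring).
  apply (Derive.is_derive_mult (fun x => 2 * cosr x) (fun x => arccot (cot_num x j / cot_den j)));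
    [apply is_derive_scal, is_derive_cosr | apply is_derive_arccot_cot_quot_l].
Qed.

Lemma is_derive_total_curv_cross (i j : R) :
  is_derive (fun y => total_curv th i y) j (dcurv_cross i j).
Proof.
  apply (is_derive_ext (fun y => 2 * cosr i * arccot (cot_num i y / cot_den y))).
  { intros y. symmetry. apply total_curv_arccot. }
  replace (dcurv_cross i j)
    with (2 * cosr i * - (sinr i * cosr j * cot_den j / sin2_dist i j))
    by (unfold dcurv_cross, Rdiv; ring).
  apply is_derive_scal, is_derive_arccot_cot_quot_r.
Qed.

Lemma dcurv_cross_sym (i j : R) : dcurv_cross i j = dcurv_cross j i.
Proof. unfold dcurv_cross, cot_den. rewrite sin2_dist_sym. unfold Rdiv. ring. Qed.

Lemma dcurv_cross_lt0 (i j : R) : dcurv_cross i j < 0.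
Proof.
  pose proof (cosr_gt0 i). pose proof (cosr_gt0 j). pose proof (sinr_gt0 i).
  pose proof (cot_den_gt0 j). pose proof (sin2_dist_gt0 i j) as HW.
  assert (Hnum : 0 < 2 * cosr i * cosr j * sinr i * cot_den j)
    by (apply Rmult_lt_0_compat; [repeat apply Rmult_lt_0_compat |]; lra).
  pose proof (Rdiv_lt_0_compat _ _ Hnum HW). unfold dcurv_cross. lra.
Qed.

Lemma dcurv_self_add_cross (i j : R) :
  let q := cot_num i j / cot_den j in
  dcurv_self i j + dcurv_cross i j
  = 2 * sinr i ^ 2 * cosr i * (arccot q - q / (1 + q²)).
Proof.
  intros q. unfold q, dcurv_self, dcurv_cross.
  pose proof (cot_den_gt0 j). pose proof (sin2_dist_gt0 i j).
  pose proof (cosr_sub_cos_dist i j).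
  set (A := arccot _). rewrite <- (cot_num_cot_den_sqr i j) in *.
  unfold Rsqr. field_simplify_eq; [| lra].
  simpl in *. nsatz.
Qed.

Lemma dcurv_row_sum_gt0 (i j : R) : 0 < dcurv_self i j + dcurv_cross i j.
Proof.
  rewrite dcurv_self_add_cross.
  pose proof (sinr_gt0 i). pose proof (cosr_gt0 i).
  pose proof (div_1_plus_sqr_lt_arccot (cot_num i j / cot_den j)).
  apply Rmult_lt_0_compat; [| lra].
  apply Rmult_lt_0_compat; [| lra].
  pose proof (pow2_gt_0 (sinr i)). nra.
Qed.

End Bigon.

Theorem lemma3p3 (th : R) (Hth : 0 < th < PI) (K1 K2 : R) :
  exists a b c d : R,
    is_derive (fun x => T1 th x K2) K1 a /\
    is_derive (fun y => T1 th K1 y) K2 b /\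
    is_derive (fun x => T2 th x K2) K1 c /\
    is_derive (fun y => T2 th K1 y) K2 d /\
    b = c /\ pos_def2 a b c d.
Proof.
  exists (dcurv_self th K1 K2), (dcurv_cross th K1 K2),
    (dcurv_cross th K2 K1), (dcurv_self th K2 K1).
  unfold T1, T2.
  assert (Hsym : dcurv_cross th K1 K2 = dcurv_cross th K2 K1)
    by apply dcurv_cross_sym.
  split; [apply is_derive_total_curv_self; exact Hth |].
  split; [apply is_derive_total_curv_cross; exact Hth |].
  split; [apply is_derive_total_curv_cross; exact Hth |].
  split; [apply is_derive_total_curv_self; exact Hth |].
  split; [exact Hsym |].
  rewrite <- Hsym. apply pos_def2_of_row_sums.
  - apply dcurv_cross_lt0; exact Hth.
  - apply dcurv_row_sum_gt0; exact Hth.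
  - rewrite Hsym. apply dcurv_row_sum_gt0; exact Hth.
Qed.
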